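(* Suppose there is an algorithm solving \textsc{BM Max-Conv UpperBound} on inputs of length $n$ in time $T(n)$. Then, given an instance $A[0..n],B[0..n],C[0..2n]$ of this problem, one can find indices $i,j$ with $C[i+j]<A[i]+B[j]$, if such indices exist, in time $O(T(n)\log n)$.
   Context: \textsc{BM Max-Conv UpperBound}: given monotone non-decreasing integer sequences $A[0..n]$, $B[0..n]$, $C[0..2n]$ with entries in $\{0,1,\dots,O(n)\}$, decide whether for all $k\in\{0,\dots,2n\}$ we have $C[k]\ge\max_{i+j=k}A[i]+B[j]$. Standing assumptions on $T$: $T(\widetilde{O}(n))\le\widetilde{O}(T(n))$ and $k\cdot T(n)\le O(T(kn))$. *)

From mathcomp Require Import all_boot.
Set Implicit Arguments. Unset Strict Implicit. Unset Printing Implicit Defensive.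

(* Instances: n, A[0..n], B[0..n], C[0..2n] given as functions nat -> nat
   (only the indicated ranges matter). *)
Definition monotone_upto (n : nat) (f : nat -> nat) : Prop :=
  forall i j, i <= j -> j <= n -> f i <= f j.

(* Valid instance: monotone non-decreasing, entries in {0, ..., K(n+1)}
   (K is the constant hidden in "O(n)"). *)
Definition valid_instance (K n : nat) (A B C : nat -> nat) : Prop :=
  [/\ monotone_upto n A, monotone_upto n B & monotone_upto (2 * n) C] /\
  [/\ (forall i, i <= n -> A i <= K * n.+1),
      (forall i, i <= n -> B i <= K * n.+1) &
      (forall k, k <= 2 * n -> C k <= K * n.+1)].

(* The answer of BM Max-Conv UpperBound: for all k, C[k] >= max_{i+j=k} A[i]+B[j],
   i.e. A[i] + B[j] <= C[i+j] for all i, j in [0..n]. *)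
Definition upper_bound (n : nat) (A B C : nat -> nat) : bool :=
  [forall i : 'I_n.+1, forall j : 'I_n.+1, A i + B j <= C (i + j)].

Definition witness (n : nat) (A B C : nat -> nat) (i j : nat) : Prop :=
  [/\ i <= n, j <= n & C (i + j) < A i + B j].

Definition memory := nat -> nat.
Definition upd (m : memory) (a v : nat) : memory :=
  fun x => if x == a then v else m x.

Inductive instr : Type :=
| IConst of nat & nat
| IAdd of nat & nat & nat
| ISub of nat & nat & nat
| IHalf of nat & nat
| ILoad of nat & nat
| IStore of nat & nat
| IJlt of nat & nat & nat
| IJmp of nat
| IOracle of nat & nat
| IHalt.

Definition oracle := nat -> (nat -> nat) -> (nat -> nat) -> (nat -> nat) -> bool.

(* Layout of an instance stored at address base:
   [base] = n, then A[0..n], then B[0..n], then C[0..2n]. *)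
Definition inst_n (m : memory) (base : nat) : nat := m base.
Definition inst_A (m : memory) (base : nat) : nat -> nat :=
  fun k => m (base + 1 + k).
Definition inst_B (m : memory) (base : nat) : nat -> nat :=
  fun k => m (base + m base + 2 + k).
Definition inst_C (m : memory) (base : nat) : nat -> nat :=
  fun k => m (base + 2 * m base + 3 + k).

(* A program counter outside the program halts.
   Every instruction costs 1; an oracle call on an instance of size n costs
   1 + T n. *)
Definition step (P : seq instr) (O : oracle) (T : nat -> nat)
    (pc : nat) (m : memory) : option (nat * memory * nat) :=
  match nth IHalt P pc with
  | IConst r v => Some (pc.+1, upd m r v, 1)
  | IAdd r a b => Some (pc.+1, upd m r (m a + m b), 1)
  | ISub r a b => Some (pc.+1, upd m r (m a - m b), 1)
  | IHalf r a => Some (pc.+1, upd m r (m a)./2, 1)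
  | ILoad r a => Some (pc.+1, upd m r (m (m a)), 1)
  | IStore a b => Some (pc.+1, upd m (m a) (m b), 1)
  | IJlt a b t => Some (if m a < m b then t else pc.+1, m, 1)
  | IJmp t => Some (t, m, 1)
  | IOracle r a =>
      let base := m a in
      Some (pc.+1,
            upd m r (nat_of_bool (O (inst_n m base) (inst_A m base)
                                    (inst_B m base) (inst_C m base))),
            (T (inst_n m base)).+1)
  | IHalt => None
  end.

Inductive Exec (P : seq instr) (O : oracle) (T : nat -> nat)
  : nat -> memory -> nat -> memory -> Prop :=
| ExecHalt pc m : step P O T pc m = None -> Exec P O T pc m 0 m
| ExecStep pc m pc' m' c t mf :
    step P O T pc m = Some (pc', m', c) ->
    Exec P O T pc' m' t mf -> Exec P O T pc m (c + t) mf.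

(* Initial memory: the input instance stored at base address 0,
   all other cells 0. *)
Definition init_mem (n : nat) (A B C : nat -> nat) : memory :=
  fun x =>
    if x == 0 then n
    else if x <= n.+1 then A (x - 1)
    else if x <= 2 * n + 2 then B (x - n.+2)
    else if x <= 4 * n + 3 then C (x - (2 * n + 3))
    else 0.

(* Output convention: m[0] = 1 and (m[1], m[2]) a violating pair (i, j),
   or m[0] = 0 and no violating pair exists. *)
Definition correct_output (n : nat) (A B C : nat -> nat) (m : memory) : Prop :=
  (m 0 = 1 /\ witness n A B C (m 1) (m 2)) \/
  (m 0 = 0 /\ ~ (exists i j, witness n A B C i j)).

Definition oracle_solves (K : nat) (O : oracle) : Prop :=
  forall n A B C, valid_instance K n A B C -> O n A B C = upper_bound n A B C.

Definition lg (n : nat) : nat := trunc_log 2 n.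

(* T(O~(n)) <= O~(T(n)) *)
Definition softO_closed (T : nat -> nat) : Prop :=
  forall a b, exists c d, forall n m, 2 <= n ->
    m <= a * n * lg n ^ b -> T m <= c * T n * lg n ^ d.

(* k * T(n) <= O(T(k n)) *)
Definition superadditive_O (T : nat -> nat) : Prop :=
  exists c, forall k n, 0 < k -> 0 < n -> k * T n <= c * T (k * n).

(* T(n) = Omega(n): any algorithm solving the problem reads its input. *)
Definition reads_input (T : nat -> nat) : Prop :=
  exists c, forall n, 0 < n -> n <= c * T n.

From mathcomp Require Import all_boot zify.
From Stdlib Require Import FunctionalExtensionality.

(* Binary search on a prefix bound h.  Replacing C[k] by the constant
   M = C[2n] + A[n] + B[n] for every k >= h keeps the instance monotone with
   entries at most 3K(n+1), and M dominates every A[i] + B[j]; so the oracle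
   accepts the capped instance exactly when no violation has i + j < h.
   O(log n) such queries find the least k = i + j carrying a violation, and a
   linear scan over i then produces one.  A query costs O(n) to build plus
   T(n), and T(n) = Omega(n), so the total is O(T(n) log n). *)

Set Implicit Arguments. Unset Strict Implicit. Unset Printing Implicit Defensive.

Notation clen n := (2 * n + 1).

Section CappedInstance.
Variables (n : nat) (A B C : nat -> nat).

Definition no_violation_below (h : nat) : Prop :=
  forall i j, i <= n -> j <= n -> i + j < h -> A i + B j <= C (i + j).

Definition violation_below (h : nat) : Prop :=
  exists i j, witness n A B C i j /\ i + j < h.

Definition cap_value : nat := C (2 * n) + A n + B n.

Definition cap_from (h : nat) (k : nat) : nat := if k < h then C k else cap_value.

Lemma valid_instance_cap_from K h :
  valid_instance K n A B C -> valid_instance (3 * K) n A B (cap_from h).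
Proof.
move=> [[mA mB mC] [bA bB bC]]; split; split=> //.
- move=> k k' hk hk'; rewrite /cap_from.
  case: ifP => hkh; case: ifP => hk'h; try lia.
  + exact: mC.
  + by have := mC k (2 * n) ltac:(lia) (leqnn _); rewrite /cap_value; lia.
- by move=> i /bA; lia.
- by move=> j /bB; lia.
- move=> k hk; rewrite /cap_from; case: ifP => _; first by have := bC k hk; lia.
  have := bC _ (leqnn _); have := bA _ (leqnn n); have := bB _ (leqnn n).
  rewrite /cap_value; lia.
Qed.

Lemma upper_bound_cap_from_true h :
  upper_bound n A B (cap_from h) -> no_violation_below h.
Proof.
move=> /forallP ub i j hi hj hij.
have := forallP (ub (@Ordinal n.+1 i hi)) (@Ordinal n.+1 j hj).
by rewrite /= /cap_from hij.
Qed.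

End CappedInstance.

Section SearchInvariant.
Variables (n : nat) (A B C : nat -> nat).
Hypotheses (monoA : monotone_upto n A) (monoB : monotone_upto n B).
Local Notation cap_from := (cap_from n A B C).
Local Notation no_violation_below := (no_violation_below n A B C).
Local Notation violation_below := (violation_below n A B C).

Lemma sum_le_cap_value i j : i <= n -> j <= n -> A i + B j <= cap_value n A B C.
Proof.
move=> hi hj; have := monoA hi (leqnn n); have := monoB hj (leqnn n).
rewrite /cap_value; lia.
Qed.

Lemma upper_bound_cap_from_false h :
  ~~ upper_bound n A B (cap_from h) -> violation_below h.
Proof.
move=> /forallPn [[i hi]] /forallPn [[j hj]] /=.
rewrite -ltnNge /cap_from; case: ifP => hij viol.
  by exists i, j.
by have := sum_le_cap_value hi hj; lia.
Qed.

(* [hi = clen n + 1] stands for "no violation found yet". *)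
Definition search_invariant (lo hi : nat) : Prop :=
  [/\ lo < hi <= (clen n).+1, no_violation_below lo & (hi <= clen n -> violation_below hi)].

Lemma search_invariant_init : search_invariant 0 (clen n).+1.
Proof. by split=> //; lia. Qed.

Definition query_answer (lo hi : nat) : bool := upper_bound n A B (cap_from (lo + hi)./2).

Lemma search_invariant_step lo hi : search_invariant lo hi -> lo.+1 < hi ->
  if query_answer lo hi then search_invariant (lo + hi)./2 hi
  else search_invariant lo (lo + hi)./2.
Proof.
move=> [lohi below above] gap.
have /andP[? ?] : (lo + hi)./2 + (lo + hi)./2 <= lo + hi <= (lo + hi)./2 + (lo + hi)./2 + 1.
  by have := odd_double_half (lo + hi); rewrite -addnn; case: odd => /=; lia.
by case: ifPn => [/upper_bound_cap_from_true | /upper_bound_cap_from_false] ub;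
  split=> //; lia.
Qed.

Lemma no_witness_of_search_invariant :
  search_invariant (clen n) (clen n).+1 -> ~ exists i j, witness n A B C i j.
Proof. by move=> [_ below _] [i [j [hi hj]]]; have := below i j hi hj; lia. Qed.

Lemma witness_of_search_invariant lo : search_invariant lo lo.+1 -> lo < clen n ->
  exists i j, witness n A B C i j /\ i + j = lo.
Proof.
move=> [_ below above] lo_lt; have [i [j [[hi hj viol] ij_lt]]] := above lo_lt.
exists i, j; split=> //; case: (ltnP (i + j) lo) => // ij_lt'.
  by have := below i j hi hj ij_lt'; lia.
lia.
Qed.

End SearchInvariant.

Definition agree_upto (n : nat) (f g : nat -> nat) : Prop :=
  forall i, i <= n -> f i = g i.

Section Agreement.
Variables (n : nat) (A B C A' B' C' : nat -> nat).
Hypotheses (eqA : agree_upto n A' A) (eqB : agree_upto n B' B)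
  (eqC : agree_upto (2 * n) C' C).

Lemma valid_instance_agree K :
  valid_instance K n A B C -> valid_instance K n A' B' C'.
Proof.
move=> [[mA mB mC] [bA bB bC]]; split; split.
- by move=> i j hij hj; rewrite !eqA //; [apply: mA | lia].
- by move=> i j hij hj; rewrite !eqB //; [apply: mB | lia].
- by move=> i j hij hj; rewrite !eqC //; [apply: mC | lia].
- by move=> i hi; rewrite eqA //; apply: bA.
- by move=> i hi; rewrite eqB //; apply: bB.
- by move=> k hk; rewrite eqC //; apply: bC.
Qed.

Lemma upper_bound_agree : upper_bound n A' B' C' = upper_bound n A B C.
Proof.
apply: eq_forallb => i; apply: eq_forallb => j.
have hi : i <= n := ltn_ord i; have hj : j <= n := ltn_ord j.
by rewrite eqA // eqB // eqC //; lia.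
Qed.

End Agreement.

Definition instance_at (m : memory) (b n : nat) (A B C : nat -> nat) : Prop :=
  [/\ m b = n, forall i, i <= n -> m (b + 1 + i) = A i,
      forall j, j <= n -> m (b + n + 2 + j) = B j
    & forall k, k <= 2 * n -> m (b + 2 * n + 3 + k) = C k].

Lemma oracle_instance_at K O m b n A B C :
  oracle_solves K O -> valid_instance K n A B C -> instance_at m b n A B C ->
  O (inst_n m b) (inst_A m b) (inst_B m b) (inst_C m b) = upper_bound n A B C.
Proof.
move=> solves valid [mb eqA eqB eqC]; rewrite /inst_n /inst_B /inst_C mb.
rewrite solves; first exact: upper_bound_agree.
exact: valid_instance_agree valid.
Qed.

Section Runs.
Variables (P : seq instr) (O : oracle) (T : nat -> nat).

Inductive Run : nat -> memory -> nat -> nat -> memory -> Prop :=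
| RunNil pc m : Run pc m 0 pc m
| RunCons pc m pc1 m1 c t pc2 m2 :
    step P O T pc m = Some (pc1, m1, c) -> Run pc1 m1 t pc2 m2 ->
    Run pc m (c + t) pc2 m2.

Lemma Run_trans pc m t1 pc1 m1 t2 pc2 m2 :
  Run pc m t1 pc1 m1 -> Run pc1 m1 t2 pc2 m2 -> Run pc m (t1 + t2) pc2 m2.
Proof.
elim=> // {}pc {}m pc' m' c t {}pc1 {}m1 Hs _ IH H2.
by rewrite -addnA; apply: RunCons Hs (IH H2).
Qed.

Lemma Run_Exec pc m t pc1 m1 t' mf :
  Run pc m t pc1 m1 -> Exec P O T pc1 m1 t' mf -> Exec P O T pc m (t + t') mf.
Proof.
elim=> // {}pc {}m pc' m' c {}t {}pc1 {}m1 Hs _ IH H2.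
by rewrite -addnA; apply: ExecStep Hs (IH H2).
Qed.

Lemma Run_unit_step pc m pc1 m1 t pc2 m2 :
  step P O T pc m = Some (pc1, m1, 1) -> Run pc1 m1 t pc2 m2 ->
  Run pc m t.+1 pc2 m2.
Proof. exact: RunCons. Qed.

Lemma step_jlt_taken pc m a b t :
  nth IHalt P pc = IJlt a b t -> m a < m b -> step P O T pc m = Some (t, m, 1).
Proof. by rewrite /step => -> ->. Qed.

Lemma step_jlt_fallthrough pc m a b t :
  nth IHalt P pc = IJlt a b t -> m b <= m a ->
  step P O T pc m = Some (pc.+1, m, 1).
Proof. by rewrite /step => -> ; rewrite ltnNge => ->. Qed.

End Runs.

Lemma upd_neq m a v x : x != a -> upd m a v x = m x.
Proof. by rewrite /upd => /negbTE ->. Qed.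

Lemma upd_eq m a v x : x = a -> upd m a v x = v.
Proof. by rewrite /upd => ->; rewrite eqxx. Qed.

Lemma upd_upd m a v w : upd (upd m a v) a w = upd m a w.
Proof. by apply: functional_extensionality => x; rewrite /upd; case: (x == a). Qed.

Arguments upd : simpl never.

(* zify turns every disequality hypothesis into a disjunction, so lia is
   exponential in their number. *)
Ltac lia' := repeat match goal with
  | H : is_true (_ != _) |- _ => clear H
  | H : _ <> _ |- _ => clear H
  | H : is_true (~~ _) |- _ => clear H end; lia.

Ltac if_simpl := repeat match goal with |- context [if ?c then _ else _] =>
  first [rewrite (@ifT _ c); [|lia'] | rewrite (@ifF _ c); [|apply: negbTE; lia']] end.

Ltac mem_simpl :=
  repeat (rewrite ?upd_upd; match goal with
  | |- context [upd ?m ?a ?v ?x] =>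
      (rewrite (@upd_neq m a v x); [|by [] || (by rewrite eq_sym) || (apply/eqP; lia')])
      || (rewrite (@upd_eq m a v x); [|by [] || lia'])
  end).

Ltac exec_step :=
  eapply Run_unit_step;
    [rewrite /step /=; mem_simpl; try if_simpl; reflexivity|];
  mem_simpl.

Definition code_at (P : seq instr) (l : nat) (c : seq instr) : Prop :=
  take (size c) (drop l P) = c.

Lemma code_at_nth P l c k :
  code_at P l c -> k < size c -> nth IHalt P (k + l) = nth IHalt c k.
Proof. by rewrite /code_at => hc hk; rewrite -hc nth_take // nth_drop addnC. Qed.

Definition copy_loop (l src dst stop one tmp : nat) : seq instr :=
  [:: IJlt src stop (2 + l); IJmp (7 + l); ILoad tmp src; IStore dst tmp;
      IAdd src src one; IAdd dst dst one; IJmp l].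

Definition fill_loop (l src dst stop one tmp : nat) : seq instr :=
  [:: IJlt src stop (2 + l); IJmp (6 + l); IStore dst tmp; IAdd src src one;
      IAdd dst dst one; IJmp l].

Ltac code_step hc k :=
  apply: Run_unit_step; first by rewrite /step (code_at_nth (k := k) hc).

Section Loops.
Variables (P : seq instr) (O : oracle) (T : nat -> nat).
Variables (l src dst stop one tmp r : nat).
Hypothesis regs_uniq : uniq [:: src; dst; stop; one; tmp].
Hypothesis regs_low : all (fun x => x < r) [:: src; dst; stop; one; tmp].

Ltac regs_facts :=
  have := regs_uniq; have := regs_low; rewrite /= !inE !negb_or => ? ?;
  repeat match goal with H : is_true (_ && _) |- _ => case/andP: H => ? ? end.

Lemma copy_loop_spec :
  code_at P l (copy_loop l src dst stop one tmp) ->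
  forall len m s0 d0,
  m src = s0 -> m dst = d0 -> m stop = s0 + len -> m one = 1 ->
  r <= s0 -> r <= d0 -> (s0 + len <= d0 \/ d0 + len <= s0) ->
  exists m', Run P O T l m (len * 6 + 2) (7 + l) m' /\
    m' src = s0 + len /\ m' dst = d0 + len /\ m' stop = s0 + len /\ m' one = 1 /\
    (forall x, x < len -> m' (d0 + x) = m (s0 + x)) /\
    (forall y, y != src -> y != dst -> y != tmp -> (y < d0 \/ d0 + len <= y) -> m' y = m y).
Proof.
move=> hc; regs_facts; have test_instr := code_at_nth (k := 0) hc erefl.
elim=> [|len IH] m s0 d0 ms md me mo Rs Rd Hdis.
  exists m; split.
    apply: Run_unit_step; first by apply: (step_jlt_fallthrough O T test_instr); lia'.
    by code_step hc 1; apply: RunNil.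
  by do !split=> //; try lia'; move=> x; lia'.
set m1 := upd (upd (upd (upd m tmp (m s0)) d0 (m s0)) src s0.+1) dst d0.+1.
have R_iter : Run P O T l m 6 l m1.
  apply: Run_unit_step; first by apply: (step_jlt_taken O T test_instr); lia'.
  code_step hc 2; code_step hc 3; code_step hc 4; code_step hc 5; code_step hc 6.
  rewrite ms; mem_simpl; rewrite ?ms ?md ?mo; mem_simpl; rewrite ?ms ?md ?mo; mem_simpl.
  by rewrite ?ms ?md ?mo ?addn1; apply: RunNil.
have [m' [R_rest [A1 [A2 [A3 [A4 [A5 A6]]]]]]] := IH m1 s0.+1 d0.+1
  ltac:(by rewrite /m1; mem_simpl) ltac:(by rewrite /m1; mem_simpl)
  ltac:(by rewrite /m1; mem_simpl; lia') ltac:(by rewrite /m1; mem_simpl)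
  ltac:(lia') ltac:(lia') ltac:(lia').
exists m'; split; first by have := Run_trans R_iter R_rest; rewrite mulSn addnA addnC.
do !split => //; try lia'.
- move=> [|x] Hx.
  + rewrite addn0 A6; try (apply/eqP; lia'); last lia'.
    by rewrite /m1; mem_simpl; rewrite addn0.
  + by rewrite addnS -addSn A5; [rewrite /m1; mem_simpl; rewrite addSnnS | lia'].
- move=> y ys yd yv Hy.
  by rewrite A6 //; [rewrite /m1; mem_simpl | lia'].
Qed.

Lemma fill_loop_spec :
  code_at P l (fill_loop l src dst stop one tmp) ->
  forall len m s0 d0,
  m src = s0 -> m dst = d0 -> m stop = s0 + len -> m one = 1 -> r <= d0 ->
  exists m', Run P O T l m (len * 5 + 2) (6 + l) m' /\
    m' src = s0 + len /\ m' dst = d0 + len /\ m' stop = s0 + len /\ m' one = 1 /\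
    m' tmp = m tmp /\
    (forall x, x < len -> m' (d0 + x) = m tmp) /\
    (forall y, y != src -> y != dst -> (y < d0 \/ d0 + len <= y) -> m' y = m y).
Proof.
move=> hc; regs_facts; have test_instr := code_at_nth (k := 0) hc erefl.
elim=> [|len IH] m s0 d0 ms md me mo Rd.
  exists m; split.
    apply: Run_unit_step; first by apply: (step_jlt_fallthrough O T test_instr); lia'.
    by code_step hc 1; apply: RunNil.
  by do !split=> //; try lia'; move=> x; lia'.
set m1 := upd (upd (upd m d0 (m tmp)) src s0.+1) dst d0.+1.
have R_iter : Run P O T l m 5 l m1.
  apply: Run_unit_step; first by apply: (step_jlt_taken O T test_instr); lia'.
  code_step hc 2; code_step hc 3; code_step hc 4; code_step hc 5.
  rewrite md; mem_simpl; rewrite ?ms ?md ?mo; mem_simpl; rewrite ?ms ?md ?mo; mem_simpl.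
  by rewrite ?ms ?md ?mo ?addn1; apply: RunNil.
have m1v : m1 tmp = m tmp by rewrite /m1; mem_simpl.
have [m' [R_rest [A1 [A2 [A3 [A4 [A7 [A5 A6]]]]]]]] := IH m1 s0.+1 d0.+1
  ltac:(by rewrite /m1; mem_simpl) ltac:(by rewrite /m1; mem_simpl)
  ltac:(by rewrite /m1; mem_simpl; lia') ltac:(by rewrite /m1; mem_simpl)
  ltac:(lia').
exists m'; split; first by have := Run_trans R_iter R_rest; rewrite mulSn addnA addnC.
rewrite m1v in A7; do !split => //; try lia'.
- move=> [|x] Hx.
  + rewrite addn0 A6; try (apply/eqP; lia'); last lia'.
    by rewrite /m1; mem_simpl.
  + by rewrite addnS -addSn A5 ?m1v; lia'.
- move=> y ys yd Hy.
  by rewrite A6 //; [rewrite /m1; mem_simpl | lia'].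
Qed.

End Loops.

(* Cells 0..11 are registers.  The program copies the input (cells 0..4n+3)
   to start at [qbase n], where it becomes the instance handed to the oracle
   (0-46), saves C at [csave n] and sets up the search registers (47-72).  A
   search round (73-102) overwrites the C-part [qC n] of that instance with C
   capped at the midpoint and calls the oracle; the scan (103-128) then looks
   for the witness. *)
Notation qbase n := (16 * n - 1).
Notation qC n := (18 * n + 2).
Notation csave n := (20 * n + 3).

Definition prog : seq instr :=
 (*0*)  [:: IAdd 0 0 0; IAdd 0 0 0; IAdd 0 0 0; IAdd 0 0 0;
 (*4*)      IStore 0 1; IConst 1 1; IAdd 1 0 1; IStore 1 2; IConst 2 1;
 (*9*)      IAdd 1 1 2; IStore 1 3; IAdd 1 1 2; IStore 1 4; IAdd 1 1 2; IStore 1 5;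
 (*15*)     IAdd 1 1 2; IStore 1 6; IAdd 1 1 2; IStore 1 7; IAdd 1 1 2; IStore 1 8;
 (*21*)     IAdd 1 1 2; IStore 1 9; IAdd 1 1 2; IStore 1 10; IAdd 1 1 2; IStore 1 11;
 (*27*)     IHalf 3 0; IHalf 3 3; IHalf 3 3; IHalf 3 3; ISub 4 0 2; IStore 4 3;
 (*33*)     IConst 5 12; IConst 6 12; IAdd 6 6 4; IAdd 7 3 3; IAdd 7 7 7;
 (*38*)     IConst 8 4; IAdd 7 7 8] ++
 (*40*) copy_loop 40 5 6 7 2 8 ++
 (*47*) [:: IConst 11 0; IAdd 9 6 11; IAdd 10 3 3; IAdd 10 10 2; ISub 5 9 10;
 (*52*)     IAdd 7 9 11] ++
 (*53*) copy_loop 53 5 6 7 2 8 ++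
 (*60*) [:: IAdd 8 9 10; ISub 8 8 2; ILoad 1 8; IAdd 8 4 3; IAdd 8 8 2; ILoad 0 8;
 (*66*)     IAdd 1 1 0; ISub 8 9 10; ISub 8 8 2; ILoad 0 8; IAdd 1 1 0;
 (*71*)     IConst 3 0; IAdd 0 10 2;
 (*73*)     IAdd 8 3 2; IJlt 8 0 76; IJmp 103;
 (*76*)     IAdd 8 3 0; IHalf 8 8; IAdd 7 9 8; IAdd 5 9 11; ISub 6 9 10] ++
 (*81*) copy_loop 81 5 6 7 2 8 ++
 (*88*) [:: IAdd 7 9 10] ++
 (*89*) fill_loop 89 5 6 7 2 1 ++
 (*95*) [:: IOracle 8 4; IAdd 7 3 0; IHalf 7 7; IJlt 8 2 101; IAdd 3 7 11;
 (*100*)    IJmp 73; IAdd 0 7 11; IJmp 73;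
 (*103*)    IAdd 8 10 2; IJlt 0 8 107; IConst 0 0; IHalt;
 (*107*)    IAdd 8 9 3; ILoad 1 8; ILoad 10 4; IConst 5 0;
 (*111*)    ISub 6 3 5; IJlt 10 6 123; IAdd 7 4 2; IAdd 7 7 5; ILoad 7 7;
 (*116*)    IAdd 8 4 10; IAdd 8 8 2; IAdd 8 8 2; IAdd 8 8 6; ILoad 8 8;
 (*121*)    IAdd 7 7 8; IJlt 1 7 125;
 (*123*)    IAdd 5 5 2; IJmp 111;
 (*125*)    IAdd 1 5 11; IAdd 2 6 11; IConst 0 1; IHalt].

Section InitialMemory.
Variables (n : nat) (A B C : nat -> nat).

Lemma init_mem_A i : i <= n -> init_mem n A B C (1 + i) = A i.
Proof. by move=> hi; rewrite /init_mem; if_simpl; congr A; lia. Qed.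

Lemma init_mem_B j : j <= n -> init_mem n A B C (n + 2 + j) = B j.
Proof. by move=> hj; rewrite /init_mem; if_simpl; congr B; lia. Qed.

Lemma init_mem_C k : k <= 2 * n -> init_mem n A B C (2 * n + 3 + k) = C k.
Proof. by move=> hk; rewrite /init_mem; if_simpl; congr C; lia. Qed.

Lemma instance_at_init_mem_copy m b :
  m b = n -> (forall x, 1 <= x <= 4 * n + 3 -> m (b + x) = init_mem n A B C x) ->
  instance_at m b n A B C.
Proof.
move=> mb copy; split=> //.
- by move=> i hi; rewrite -addnA copy ?init_mem_A //; lia.
- by move=> j hj; rewrite -!addnA copy ?addnA ?init_mem_B //; lia.
- move=> k hk; rewrite (_ : b + 2 * n + 3 + k = b + (2 * n + 3 + k)); last lia.
  by rewrite copy ?init_mem_C //; lia.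
Qed.

End InitialMemory.

Ltac discharge_premises H := match type of H with
  | ?P -> _ => let p := fresh in assert (p : P) by (mem_simpl; by [] || lia');
               specialize (H p); clear p; discharge_premises H
  | _ => idtac end.

(* Extends the run [R] in the context by the run given by lemma [L]. *)
Ltac run_then L := match goal with R : Run _ _ _ _ _ _ _ ?M |- _ =>
   let R2 := fresh in pose proof (L M) as R2; discharge_premises R2;
   have {}R := Run_trans R R2; clear R2; move: R; mem_simpl; move=> R end.

Section SaveInput.
Variables (O : oracle) (T : nat -> nat) (n : nat).
Hypothesis n_ge2 : 2 <= n.

Lemma times16_spec m : m 0 = n -> Run prog O T 0 m 4 4 (upd m 0 (16 * n)).
Proof.
move=> m0; do 4 exec_step; rewrite m0.
match goal with |- Run _ _ _ _ (upd _ _ ?v) _ _ _ => have -> : v = 16 * n by lia end.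
exact: RunNil.
Qed.

Lemma save_first_cells_spec m : m 0 = 16 * n ->
  Run prog O T 4 m 5 9
    (upd (upd (upd (upd m (16 * n) (m 1)) 1 (16 * n + 1)) (16 * n + 1) (m 2)) 2 1).
Proof. by move=> m0; do 5 exec_step; rewrite m0; mem_simpl; apply: RunNil. Qed.

Lemma save_cell_spec pc x p m :
  code_at prog pc [:: IAdd 1 1 2; IStore 1 x] -> x != 1 -> m 1 = p -> m 2 = 1 ->
  Run prog O T pc m 2 pc.+2 (upd (upd m 1 (p + 1)) (p + 1) (m x)).
Proof.
move=> hc hx m1 m2; code_step hc 0; code_step hc 1.
by mem_simpl; rewrite m1 m2; apply: RunNil.
Qed.

Lemma halve16 : (16 * n)./2./2./2./2 = n.
Proof. by rewrite (_ : 16 * n = (n.*2.*2.*2.*2)) ?doubleK // -!mul2n; lia. Qed.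

Lemma copy_setup_spec m : m 0 = 16 * n -> m 2 = 1 ->
  Run prog O T 27 m 13 40
    (upd (upd (upd (upd (upd (upd (upd (upd m 3 n) 4 (qbase n)) (qbase n) n) 5 12)
       6 (12 + qbase n)) 7 (n + n + (n + n))) 8 4) 7 (n + n + (n + n) + 4)).
Proof. by move=> m0 m2; do 13 exec_step; rewrite m0 m2 halve16; apply: RunNil. Qed.

Lemma save_registers_spec m0 : m0 0 = n -> exists m, Run prog O T 0 m0 40 40 m /\
  m 2 = 1 /\ m 3 = n /\ m 4 = qbase n /\ m 5 = 12 /\ m 6 = qbase n + 12 /\
  m 7 = 4 * n + 4 /\ m (qbase n) = n /\
  (forall x, 1 <= x <= 11 -> m (qbase n + x) = m0 x) /\
  (forall x, 12 <= x <= 4 * n + 3 -> m x = m0 x).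
Proof.
move=> m00; have R := times16_spec m00.
run_then save_first_cells_spec.
run_then (@save_cell_spec 9 3 (16 * n + 1)).
run_then (@save_cell_spec 11 4 (16 * n + 2)).
run_then (@save_cell_spec 13 5 (16 * n + 3)).
run_then (@save_cell_spec 15 6 (16 * n + 4)).
run_then (@save_cell_spec 17 7 (16 * n + 5)).
run_then (@save_cell_spec 19 8 (16 * n + 6)).
run_then (@save_cell_spec 21 9 (16 * n + 7)).
run_then (@save_cell_spec 23 10 (16 * n + 8)).
run_then (@save_cell_spec 25 11 (16 * n + 9)).
run_then copy_setup_spec.
eexists; split; first exact R.
do 7 (split; [mem_simpl; try lia'|]).
split; last by move=> x hx; mem_simpl.
move=> x hx.
have [->|[->|[->|[->|[->|[->|[->|[->|[->|[->|->]]]]]]]]]] :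
  x = 1 \/ x = 2 \/ x = 3 \/ x = 4 \/ x = 5 \/ x = 6 \/ x = 7 \/ x = 8 \/ x = 9 \/
  x = 10 \/ x = 11 by lia.
all: by mem_simpl.
Qed.

Lemma save_input_spec A B C :
  exists m, Run prog O T 0 (init_mem n A B C) (40 + ((4 * n - 8) * 6 + 2)) 47 m /\
  m 2 = 1 /\ m 3 = n /\ m 4 = qbase n /\ m 6 = qbase n + 4 * n + 4 /\
  instance_at m (qbase n) n A B C.
Proof.
have [mA [RA [a2 [a3 [a4 [a5 [a6 [a7 [aB [aQ aI]]]]]]]]]] := save_registers_spec
  (m0 := init_mem n A B C) erefl.
have [mB [RB [b5 [b6 [b7 [b2 [bC bF]]]]]]] :=
  @copy_loop_spec prog O T 40 5 6 7 2 8 12 erefl erefl erefl (4 * n - 8) mA 12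
    (qbase n + 12) a5 a6 ltac:(lia) a2 (leqnn _) ltac:(lia) ltac:(lia).
exists mB; split; first exact: Run_trans RA RB.
have frame y : y != 5 -> y != 6 -> y != 8 -> y < qbase n + 12 -> mB y = mA y.
  by move=> *; rewrite bF //; lia.
split; first exact: b2.
do 2 (split; first by rewrite frame //; lia).
split; first by rewrite b6; lia.
apply: instance_at_init_mem_copy; first by rewrite frame //; lia.
move=> x hx; case: (ltnP x 12) => hx12; first by rewrite frame ?aQ //; lia.
have := bC (x - 12) ltac:(lia).
rewrite (_ : qbase n + 12 + (x - 12) = qbase n + x); last lia.
by move=> ->; rewrite subnKC // aI //; lia.
Qed.

End SaveInput.

Section SearchSetup.
Variables (O : oracle) (T : nat -> nat) (n : nat) (A B C : nat -> nat).
Hypothesis n_ge2 : 2 <= n.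

Definition input_layout (m : memory) : Prop :=
  [/\ m (qbase n) = n, forall i, i <= n -> m (qbase n + 1 + i) = A i,
      forall j, j <= n -> m (qbase n + n + 2 + j) = B j
    & forall k, k <= 2 * n -> m (csave n + k) = C k].

Definition search_regs (lo hi : nat) (m : memory) : Prop :=
  [/\ m 0 = hi, m 1 = cap_value n A B C, m 2 = 1, m 3 = lo
    & [/\ m 4 = qbase n, m 9 = csave n, m 10 = clen n & m 11 = 0]].

Lemma input_layout_frame m m' : input_layout m ->
  (forall y, 12 <= y -> y < qC n \/ csave n <= y -> m' y = m y) -> input_layout m'.
Proof.
move=> [lb lA lB lC] frame; split.
- by rewrite frame //; lia.
- by move=> i hi; rewrite frame ?lA //; lia.
- by move=> j hj; rewrite frame ?lB //; lia.
- by move=> k hk; rewrite frame ?lC //; lia.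
Qed.

Lemma search_regs_frame lo hi m m' : search_regs lo hi m ->
  (forall y, y < 12 -> y != 5 -> y != 6 -> y != 7 -> y != 8 -> m' y = m y) ->
  search_regs lo hi m'.
Proof. by move=> [? ? ? ? [? ? ? ?]] frame; split; rewrite ?frame //; split; rewrite frame. Qed.

Lemma init_search_spec m :
  m 2 = 1 -> m 3 = n -> m 4 = qbase n -> m 6 = qbase n + 4 * n + 4 ->
  instance_at m (qbase n) n A B C ->
  exists m', Run prog O T 47 m (6 + (clen n * 6 + 2) + 13) 73 m' /\
    input_layout m' /\ search_regs 0 (clen n).+1 m'.
Proof.
move=> r2 r3 r4 r6 [mb iA iB iC].
evar (m1 : memory).
have R1 : Run prog O T 47 m 6 53 m1.
  by rewrite /m1; do 6 exec_step; rewrite r3 r2 r6; apply: RunNil.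
have [mD [RD [d5 [d6 [d7 [d2 [dC dF]]]]]]] :=
  @copy_loop_spec prog O T 53 5 6 7 2 8 12 erefl erefl erefl (clen n) m1 (qC n) (csave n)
    ltac:(rewrite /m1; mem_simpl; lia') ltac:(rewrite /m1; mem_simpl; lia')
    ltac:(rewrite /m1; mem_simpl; lia') ltac:(rewrite /m1; mem_simpl; lia')
    ltac:(lia') ltac:(lia') ltac:(lia').
have [e3 e4 e9 e10 e11] :
    [/\ mD 3 = n, mD 4 = qbase n, mD 9 = csave n, mD 10 = clen n & mD 11 = 0].
  by split; rewrite dF // /m1; mem_simpl; lia'.
have frame y : 12 <= y -> y < csave n \/ csave n + clen n <= y -> mD y = m y.
  by move=> *; rewrite dF; [rewrite /m1; mem_simpl; lia'|apply/eqP; lia'..|lia'].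
have eA a i : a = qbase n + 1 + i -> i <= n -> mD a = A i.
  by move=> -> hi; rewrite frame ?iA //; lia'.
have eB a j : a = qbase n + n + 2 + j -> j <= n -> mD a = B j.
  by move=> -> hj; rewrite frame ?iB //; lia'.
have eC a k : a = csave n + k -> k <= 2 * n -> mD a = C k.
  move=> -> hk; rewrite dC; last lia'.
  rewrite /m1; mem_simpl; rewrite (_ : qC n + k = qbase n + 2 * n + 3 + k) ?iC //; lia'.
evar (m2 : memory).
have R2 : Run prog O T 60 mD 13 73 m2.
  by rewrite /m2; do 13 exec_step; rewrite ?e3 ?e4 ?e9 ?e10 ?e11 ?d2; apply: RunNil.
exists m2; split; first by rewrite -addnA; apply: Run_trans R1 (Run_trans RD R2).
rewrite /m2; split; split; mem_simpl => //.
- by rewrite frame //; lia'.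
- by move=> i hi; mem_simpl; apply: eA.
- by move=> j hj; mem_simpl; apply: eB.
- by move=> k hk; mem_simpl; apply: eC.
- by rewrite addn1.
- by rewrite /cap_value (eC _ (2 * n)) 1?(eA _ n) 1?(eB _ n) //; lia'.
Qed.

End SearchSetup.

Section BinarySearch.
Variables (O : oracle) (T : nat -> nat) (n : nat) (A B C : nat -> nat).
Hypothesis n_ge2 : 2 <= n.
Local Notation layout := (input_layout n A B C).
Local Notation regs := (search_regs n A B C).

Lemma build_query_spec lo hi m : layout m -> regs lo hi m -> lo.+1 < hi <= (clen n).+1 ->
  exists t mq, Run prog O T 73 m t 95 mq /\ t <= 6 * clen n + 12 /\
    layout mq /\ regs lo hi mq /\
    instance_at mq (qbase n) n A B (cap_from n A B C (lo + hi)./2).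
Proof.
move=> lay rg bounds; have [h0 h1 h2 h3 [h4 h9 h10 h11]] := rg.
have [lb lA lB lC] := lay.
set mid := (lo + hi)./2.
have mid_le : mid <= clen n.
  by rewrite /mid; have := odd_double_half (lo + hi); rewrite -addnn; case: odd => /=; lia.
evar (m1 : memory).
have R1 : Run prog O T 73 m 7 81 m1.
  by rewrite /m1; do 7 exec_step; rewrite ?h3 ?h0 ?h9 ?h11 ?h10; apply: RunNil.
have [mC [RC [c5 [c6 [c7 [c2 [cC cF]]]]]]] :=
  @copy_loop_spec prog O T 81 5 6 7 2 8 12 erefl erefl erefl mid m1 (csave n) (qC n)
    ltac:(rewrite /m1; mem_simpl; lia') ltac:(rewrite /m1; mem_simpl; lia')
    ltac:(rewrite /m1; mem_simpl; lia') ltac:(rewrite /m1; mem_simpl; lia')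
    ltac:(lia') ltac:(lia') ltac:(lia').
have fC y : y != 5 -> y != 6 -> y != 7 -> y != 8 -> y < qC n \/ csave n <= y ->
    mC y = m y.
  by move=> *; rewrite cF //; [rewrite /m1; mem_simpl | lia'].
have [_ _ _ _ [_ e9 e10 _]] : regs lo hi mC.
  by apply: (search_regs_frame rg) => y *; rewrite fC //; lia.
evar (m3 : memory).
have R3 : Run prog O T 88 mC 1 89 m3.
  by rewrite /m3; exec_step; rewrite e9 e10; apply: RunNil.
have [mS [RS [s5 [s6 [s7 [s2 [s1 [sQ sF]]]]]]]] :=
  @fill_loop_spec prog O T 89 5 6 7 2 1 12 erefl erefl erefl (clen n - mid) m3
    (csave n + mid) (qC n + mid)
    ltac:(rewrite /m3; mem_simpl; lia') ltac:(rewrite /m3; mem_simpl; lia')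
    ltac:(rewrite /m3; mem_simpl; lia') ltac:(rewrite /m3; mem_simpl; lia') ltac:(lia').
have fS y : y != 5 -> y != 6 -> y != 7 -> y != 8 -> y < qC n \/ csave n <= y ->
    mS y = m y.
  by move=> *; rewrite sF //; [rewrite /m3; mem_simpl; rewrite fC | lia'].
exists (7 + (mid * 6 + 2 + (1 + ((clen n - mid) * 5 + 2)))), mS.
split; first exact: Run_trans R1 (Run_trans RC (Run_trans R3 RS)).
split; first lia.
split; first by apply: (input_layout_frame n_ge2 lay) => y ? ?; rewrite fS //; lia'.
split; first by apply: (search_regs_frame rg) => y *; rewrite fS //; lia.
split; [by rewrite fS //; lia' | by move=> i i_le; rewrite fS ?lA //; lia' |..].
  by move=> j hj; rewrite fS ?lB //; lia'.
move=> k hk; rewrite (_ : qbase n + 2 * n + 3 + k = qC n + k); last lia.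
rewrite /cap_from; case: ifP => k_mid.
  rewrite sF; [ | lia'..].
  rewrite /m3; mem_simpl; rewrite cC // /m1; mem_simpl; rewrite lC //; lia.
rewrite (_ : qC n + k = qC n + mid + (k - mid)); last lia.
by rewrite sQ; [rewrite /m3; mem_simpl; rewrite fC //; lia' | lia].
Qed.

End BinarySearch.

Section SearchLoop.
Variables (O : oracle) (T : nat -> nat) (n : nat) (A B C : nat -> nat) (K : nat).
Hypothesis n_ge2 : 2 <= n.
Hypotheses (solves : oracle_solves (3 * K) O) (valid : valid_instance K n A B C).
Local Notation layout := (input_layout n A B C).
Local Notation regs := (search_regs n A B C).
Local Notation answer := (query_answer n A B C).

Lemma search_round_spec lo hi m : layout m -> regs lo hi m -> lo.+1 < hi <= (clen n).+1 ->
  exists t m', Run prog O T 73 m t 73 m' /\ t <= 6 * clen n + 18 + T n /\ layout m' /\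
    regs (if answer lo hi then (lo + hi)./2 else lo)
         (if answer lo hi then hi else (lo + hi)./2) m'.
Proof.
move=> lay rg bounds.
have [t1 [mq [R1 [ht1 [layq [rgq inst]]]]]] := build_query_spec O T n_ge2 lay rg bounds.
have [q0 q1 q2 q3 [q4 q9 q10 q11]] := rgq.
have [qn _ _ _] := inst.
have validq := valid_instance_cap_from ((lo + hi)./2) valid.
have ans := oracle_instance_at solves validq inst.
have RO : Run prog O T 95 mq ((T n).+1 + 0) 96 (upd mq 8 (answer lo hi)).
  by apply: RunCons (RunNil _ _ _ _ _); rewrite /step /= q4 ans /inst_n qn.
have [m' [R5 [lay' rg']]] : exists m', Run prog O T 96 (upd mq 8 (answer lo hi)) 5 73 m' /\
    layout m' /\ regs (if answer lo hi then (lo + hi)./2 else lo)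
                      (if answer lo hi then hi else (lo + hi)./2) m'.
  case: (answer lo hi); eexists; (split; first by do 5 exec_step; apply: RunNil);
  (split; first by apply: (input_layout_frame n_ge2 layq) => y ? ?; mem_simpl);
  by split; mem_simpl; rewrite ?q0 ?q2 ?q3 ?q11 ?addn0.
exists (t1 + ((T n).+1 + 0 + 5)), m'; split; first exact: Run_trans R1 (Run_trans RO R5).
by split; [lia | split].
Qed.

Lemma search_exit_spec lo hi m : layout m -> regs lo hi m -> hi <= lo.+1 ->
  exists m', Run prog O T 73 m 3 103 m' /\ layout m' /\ regs lo hi m'.
Proof.
move=> lay rg gap; have [r0 _ r2 r3 _] := rg.
eexists; split; first by do 3 exec_step; apply: RunNil.
split; first by apply: (input_layout_frame n_ge2 lay) => y ? ?; mem_simpl.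
by apply: (search_regs_frame rg) => y *; mem_simpl.
Qed.

Lemma search_loop_spec e lo hi m :
  layout m -> regs lo hi m -> search_invariant n A B C lo hi -> hi - lo <= 2 ^ e ->
  exists t m' lo', Run prog O T 73 m t 103 m' /\ t <= e * (6 * clen n + 18 + T n) + 3 /\
    layout m' /\ regs lo' lo'.+1 m' /\ search_invariant n A B C lo' lo'.+1.
Proof.
have [[monoA monoB _] _] := valid.
elim: e lo hi m => [|e IH] lo hi m lay rg inv gap; have [lohi _ _] := inv.
all: have [hgap|hgap] := ltnP lo.+1 hi; last first.
all: try (have [m' [R [lay' rg']]] := search_exit_spec lay rg hgap;
          (have hi_eq : hi = lo.+1 by lia);
          by exists 3, m', lo; rewrite -hi_eq; split=> //; split=> //; lia).
  by rewrite expn0 in gap; lia.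
have bounds : lo.+1 < hi <= (clen n).+1 by lia.
have [t1 [m1 [R1 [ht1 [lay1 rg1]]]]] := search_round_spec lay rg bounds.
have inv1 := search_invariant_step monoA monoB inv hgap.
case: (query_answer n A B C lo hi) rg1 inv1 => rg1 inv1.
all: have [|t2 [m2 [lo2 [R2 [ht2 rest]]]]] := IH _ _ _ lay1 rg1 inv1;
  first by move: gap; rewrite expnS; have := odd_double_half (lo + hi);
           rewrite -addnn; case: odd => /=; lia.
all: by exists (t1 + t2), m2, lo2; split; [apply: Run_trans R1 R2 | split; [lia|]].
Qed.

End SearchLoop.

Section Scan.
Variables (O : oracle) (T : nat -> nat) (n : nat) (A B C : nat -> nat).
Hypothesis n_ge2 : 2 <= n.
Local Notation layout := (input_layout n A B C).

Definition scan_regs (k i : nat) (m : memory) : Prop :=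
  [/\ m 1 = C k, m 2 = 1, m 3 = k, m 4 = qbase n & [/\ m 5 = i, m 10 = n & m 11 = 0]].

Lemma scan_step_spec k i0 j0 i m :
  witness n A B C i0 j0 -> i0 + j0 = k -> i <= i0 -> layout m -> scan_regs k i m ->
  (exists t mf, Exec prog O T 111 m t mf /\ t <= 15 /\ correct_output n A B C mf) \/
  (i < i0 /\ exists t m', Run prog O T 111 m t 111 m' /\ t <= 14 /\
                          layout m' /\ scan_regs k i.+1 m').
Proof.
move=> [hi0 hj0 viol] ij_k i_le lay [r1 r2 r3 r4 [r5 r10 r11]].
have [lb lA lB lC] := lay.
have lay_frame m' : (forall y, 12 <= y -> m' y = m y) -> layout m'.
  by move=> fr; apply: (input_layout_frame n_ge2 lay) => y ? _; apply: fr.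
have [j_big|j_le] := ltnP n (k - i).
  right; split; first lia.
  evar (m1 : memory).
  have R1 : Run prog O T 111 m 4 111 m1.
    by rewrite /m1; do 4 exec_step; rewrite ?r3 ?r5 ?r2; apply: RunNil.
  exists 4, m1; split=> //; split=> //.
  split; first by apply: lay_frame => y ?; rewrite /m1; mem_simpl.
  by rewrite /m1; split; mem_simpl => //; split; mem_simpl => //; lia.
evar (m1 : memory).
have R1 : Run prog O T 111 m 11 122 m1.
  rewrite /m1; do 11 exec_step; rewrite ?r3 ?r5 ?r2 ?r4 ?r10 lA; last lia.
  rewrite (_ : qbase n + n + 1 + 1 + (k - i) = qbase n + n + 2 + (k - i)) ?lB //; last lia.
  exact: RunNil.
have [found|not_found] := ltnP (C k) (A i + B (k - i)).
  left; evar (m2 : memory).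
  have R2 : Run prog O T 122 m1 4 128 m2.
    by rewrite /m2 /m1; do 4 exec_step; apply: RunNil.
  have E : Exec prog O T 128 m2 0 m2 by apply: ExecHalt.
  exists (11 + 4 + 0), m2; split; first exact: Run_Exec (Run_trans R1 R2) E.
  split=> //; left; rewrite /m2 /m1; mem_simpl; rewrite r5 r11 !addn0.
  by split=> //; split; [lia | lia | rewrite subnKC //; lia].
right; split.
  rewrite ltn_neqAle i_le andbT; apply/eqP => i_eq; move: not_found.
  by rewrite i_eq (_ : k - i0 = j0) -?ij_k; lia.
evar (m2 : memory).
have R2 : Run prog O T 122 m1 3 111 m2.
  by rewrite /m2 /m1; do 3 exec_step; rewrite ?r5 ?r2; apply: RunNil.
exists (11 + 3), m2; split; first exact: Run_trans R1 R2.
split=> //; split; first by apply: lay_frame => y ?; rewrite /m2 /m1; mem_simpl.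
by rewrite /m2 /m1; split; mem_simpl => //; split; mem_simpl => //; lia.
Qed.

Lemma scan_spec k i0 j0 : witness n A B C i0 j0 -> i0 + j0 = k ->
  forall d i m, i0 - i <= d -> i <= i0 -> layout m -> scan_regs k i m ->
  exists t mf, Exec prog O T 111 m t mf /\ t <= 14 * d + 15 /\ correct_output n A B C mf.
Proof.
move=> wit ij_k; elim=> [|d IH] i m d_ge i_le lay rg.
all: case: (scan_step_spec wit ij_k i_le lay rg) => [[t [mf [E [ht out]]]]|[i_lt step]].
- by exists t, mf.
- lia.
- by exists t, mf; split=> //; split=> //; lia.
have [t [m' [R [ht [lay' rg']]]]] := step.
have [t2 [mf [E [ht2 out]]]] := IH i.+1 m' ltac:(lia) i_lt lay' rg'.
by exists (t + t2), mf; split; [apply: Run_Exec R E | split=> //; lia].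
Qed.

End Scan.

Section Finish.
Variables (O : oracle) (T : nat -> nat) (n : nat) (A B C : nat -> nat).
Hypothesis n_ge2 : 2 <= n.

Lemma finish_spec lo m : input_layout n A B C m -> search_regs n A B C lo lo.+1 m ->
  search_invariant n A B C lo lo.+1 ->
  exists t mf, Exec prog O T 103 m t mf /\ t <= 14 * n + 40 /\ correct_output n A B C mf.
Proof.
move=> lay [r0 r1 r2 r3 [r4 r9 r10 r11]] inv.
have [lb lA lB lC] := lay.
have [lo_lt|lo_ge] := ltnP lo (clen n); last first.
  evar (m1 : memory).
  have R1 : Run prog O T 103 m 3 106 m1 by rewrite /m1; do 3 exec_step; apply: RunNil.
  have E : Exec prog O T 106 m1 0 m1 by apply: ExecHalt.
  exists (3 + 0), m1; split; first exact: Run_Exec R1 E.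
  split; first lia.
  right; split; first by rewrite /m1; mem_simpl.
  by apply: no_witness_of_search_invariant; rewrite (_ : clen n = lo); last by case: inv; lia.
have [i0 [j0 [wit ij_lo]]] := witness_of_search_invariant inv lo_lt.
evar (m1 : memory).
have R1 : Run prog O T 103 m 6 111 m1.
  rewrite /m1; do 6 exec_step; rewrite ?r9 ?r3 ?r4 ?lb lC; last lia.
  exact: RunNil.
have [t [mf [E [ht out]]]] : exists t mf, Exec prog O T 111 m1 t mf /\
    t <= 14 * i0 + 15 /\ correct_output n A B C mf.
  apply: (scan_spec O T n_ge2 wit ij_lo (d := i0) (i := 0)) => //; first by rewrite subn0.
  by apply: (input_layout_frame n_ge2 lay) => y ? _; rewrite /m1; mem_simpl.
exists (6 + t), mf; split; first exact: Run_Exec R1 E.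
by split=> //; case: wit => ? _ _; lia.
Qed.

End Finish.

Lemma total_cost_le c0 n tL tF T_n :
  2 <= n -> n <= c0 * T_n -> tL <= (trunc_log 2 n).+2 * (6 * clen n + 18 + T_n) + 3 ->
  tF <= 14 * n + 40 ->
  40 + ((4 * n - 8) * 6 + 2) + (6 + (clen n * 6 + 2) + 13) + tL + tF <=
  300 * (c0 + 1) * T_n * trunc_log 2 n.
Proof.
move=> n_ge2 n_le htL htF.
have lg_ge1 : 1 <= trunc_log 2 n by rewrite trunc_log_gt0.
have T_ge1 : 1 <= T_n by case: (posnP T_n) n_le => [->|//]; rewrite muln0; lia.
nia.
Qed.

Theorem proposition6p1 (T : nat -> nat)
  (HT1 : softO_closed T) (HT2 : superadditive_O T) (HT3 : reads_input T) :
  forall K : nat, exists (K' : nat) (P : seq instr) (c : nat),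
    forall O : oracle, oracle_solves K' O ->
    forall (n : nat) (A B C : nat -> nat), 2 <= n ->
      valid_instance K n A B C ->
      exists (t : nat) (m' : memory),
        Exec P O T 0 (init_mem n A B C) t m' /\
        t <= c * T n * lg n /\
        correct_output n A B C m'.
Proof.
move=> K; have [c0 reads] := HT3.
exists (3 * K), prog, (300 * (c0 + 1)) => O solves n A B C n_ge2 valid.
have [m1 [R1 [r2 [r3 [r4 [r6 inst]]]]]] := save_input_spec O T n_ge2 A B C.
have [m2 [R2 [lay2 rg2]]] := init_search_spec O T n_ge2 r2 r3 r4 r6 inst.
have span : (clen n).+1 - 0 <= 2 ^ (lg n).+2.
  have n_lt : n < 2 ^ (lg n).+1 by apply: trunc_log_ltn.
  by move: n_lt; rewrite !expnS; lia.
have [tL [m3 [lo [R3 [htL [lay3 [rg3 inv3]]]]]]] :=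
  search_loop_spec T n_ge2 solves valid lay2 rg2 (search_invariant_init n A B C) span.
have [tF [mf [EF [htF out]]]] := finish_spec O T n_ge2 lay3 rg3 inv3.
exists (40 + ((4 * n - 8) * 6 + 2) + (6 + (clen n * 6 + 2) + 13) + tL + tF), mf.
split; first exact: Run_Exec (Run_trans (Run_trans R1 R2) R3) EF.
by split=> //; apply: total_cost_le (reads n _) htL htF; lia.
Qed.
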